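(* Let $1\le k\le d$ and $\alpha\ge1$. Let $c$ be a map that sends every finite point set $P\subset\mathbb{R}^d$ to a subset $c(P)\subseteq P$ such that, for every such $P$, $c(P)$ is an $\alpha$-approximate core-set for the $k$-directional height of $P$. Then $c$ is an $\alpha^{2k}$-composable core-set for determinant maximization with parameter $k$: for every integer $m\ge1$ and all finite point sets $P_1,\dots,P_m\subset\mathbb{R}^d$, $$\mathrm{MAXDET}_k\Big(\bigcup_{i=1}^m c(P_i)\Big)\ge\frac{1}{\alpha^{2k}}\,\mathrm{MAXDET}_k\Big(\bigcup_{i=1}^m P_i\Big).$$
   Context: For a finite set $S\subset\mathbb{R}^d$ with $|S|=k$, let $M_S$ be the $k\times d$ matrix whose rows are the points of $S$. For finite $P\subset\mathbb{R}^d$, $\mathrm{MAXDET}_k(P)=\max_{S\subseteq P,\,|S|=k}\det(M_SM_S^\top)$. Let $\mathcal{H}_{k-1}$ be the set of all $(k-1)$-dimensional linear subspaces of $\mathbb{R}^d$, and $\mathrm{dist}(p,\mathcal{H})$ the Euclidean distance from point $p$ to subspace $\mathcal{H}$. The $k$-directional height of $P$ with respect to $\mathcal{H}\in\mathcal{H}_{k-1}$ is $h(P,\mathcal{H})=\max_{p\in P}\mathrm{dist}(p,\mathcal{H})$. A subset $C\subseteq P$ is an $\alpha$-approximate core-set for the $k$-directional height of $P$ if $h(C,\mathcal{H})\ge h(P,\mathcal{H})/\alpha$ for every $\mathcal{H}\in\mathcal{H}_{k-1}$. *)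

From HB Require Import structures.
From mathcomp Require Import all_boot all_order all_algebra.
From mathcomp Require Import finmap.
From mathcomp Require Import classical_sets reals.
Set Implicit Arguments. Unset Strict Implicit. Unset Printing Implicit Defensive.
Import Order.TTheory GRing.Theory Num.Theory.
Local Open Scope ring_scope.
Local Open Scope classical_set_scope.

Section Defs.
Variables (R : realType) (d : nat).
Local Notation pt := 'rV[R]_d.

Definition enorm (p : pt) : R := Num.sqrt (\sum_(i < d) p ord0 i ^+ 2).

(* M_S : the k x d matrix whose rows are the points of S (in some enumeration;
   det(M_S M_S^T) does not depend on the order) *)
Definition ptmx (k : nat) (S : {fset pt}) : 'M[R]_(k, d) :=
  \matrix_(i < k) nth 0 (enum_fset S) i.

Definition maxdet (k : nat) (P : {fset pt}) : R :=
  \big[Num.max/0]_(S <- enum_fset (fpowerset P) | #|` S|%fset == k)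
     \det (ptmx k S *m (ptmx k S)^T).

(* a linear subspace is represented by a matrix whose row space it is;
   H is (k-1)-dimensional iff \rank H = k-1 *)
Definition dist (p : pt) (H : 'M[R]_d) : R :=
  inf [set enorm (p - h) | h in [set h : pt | (h <= H)%MS]].

Definition height (P : {fset pt}) (H : 'M[R]_d) : R :=
  \big[Num.max/0]_(p <- enum_fset P) dist p H.

Definition approx_coreset (k : nat) (alpha : R) (C P : {fset pt}) : Prop :=
  forall H : 'M[R]_d, \rank H = (k - 1)%N -> height C H >= height P H / alpha.

Definition fbigU (m : nat) (P : 'I_m -> {fset pt}) : {fset pt} :=
  \big[fsetU/fset0]_(i < m) P i.

End Defs.

(* Take a maximizing k-subset S of the union of the P_i.  For q in S and H the
   span of the other points, det(M_S M_S^T) = dist(q, H)^2 det(M_S' M_S'^T) with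
   S' = S minus q ("base times height squared").  If q is not in the union of the
   core-sets, it lies in some P_i, and since H has dimension k-1 the core-set
   c(P_i) contains a q' with dist(q', H) >= dist(q, H) / alpha: swapping q for q'
   loses at most a factor alpha^2.  After at most k swaps S lies in the union of
   the core-sets. *)

From HB Require Import structures.
From mathcomp Require Import all_boot all_order all_algebra perm.
From mathcomp Require Import finmap.
From mathcomp Require Import classical_sets reals.
Set Implicit Arguments. Unset Strict Implicit. Unset Printing Implicit Defensive.
Import Order.TTheory GRing.Theory Num.Theory.
Local Open Scope ring_scope.

Section Gram.
Variables (R : realType) (d : nat).
Local Notation pt := 'rV[R]_d.

Definition sqnorm (p : pt) : R := (p *m p^T) 0 0.

Definition gram_det n (A : 'M[R]_(n, d)) : R := \det (A *m A^T).

Lemma sqnormE (p : pt) : sqnorm p = \sum_(i < d) p 0 i ^+ 2.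
Proof. by rewrite /sqnorm mxE; apply: eq_bigr => i _; rewrite mxE expr2. Qed.

Lemma sqnorm_ge0 (p : pt) : 0 <= sqnorm p.
Proof. by rewrite sqnormE sumr_ge0 // => i _; rewrite sqr_ge0. Qed.

Lemma sqnorm_eq0 (p : pt) : sqnorm p = 0 -> p = 0.
Proof.
rewrite sqnormE => p0; apply/rowP => j; rewrite mxE; apply/eqP.
by rewrite -sqrf_eq0 (psumr_eq0P _ p0) // => i _; rewrite sqr_ge0.
Qed.

Lemma enorm_sqnorm (p : pt) : enorm p = Num.sqrt (sqnorm p).
Proof. by rewrite /enorm sqnormE. Qed.

Lemma dist_ge0 (p : pt) (H : 'M[R]_d) : 0 <= dist p H.
Proof.
apply: lb_le_inf; first by exists (enorm (p - 0)), 0; rewrite //= sub0mx.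
by move=> _ [h _ <-]; rewrite enorm_sqnorm sqrtr_ge0.
Qed.

Lemma dist_le_enorm (p h : pt) (H : 'M[R]_d) :
  (h <= H)%MS -> dist p H <= enorm (p - h).
Proof.
move=> hH; apply: ge_inf; last by exists h.
by exists 0 => _ [h' _ <-]; rewrite enorm_sqnorm sqrtr_ge0.
Qed.

Lemma dist_submx (p : pt) (H : 'M[R]_d) : (p <= H)%MS -> dist p H = 0.
Proof.
move=> pH; apply/le_anti; rewrite dist_ge0 andbT.
apply: le_trans (dist_le_enorm p pH) _.
by rewrite subrr enorm_sqnorm sqnormE big1 ?sqrtr0 // => i _; rewrite mxE expr0n.
Qed.

Section Projection.
Variables (n : nat) (q : pt) (B : 'M[R]_(n, d)).
Hypothesis gramB_neq0 : gram_det B != 0.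

Let G_unit : B *m B^T \in unitmx. Proof. by rewrite unitmxE unitfE. Qed.

(* [x0 *m B] is the orthogonal projection of [q] on the row space of [B]. *)
Let x0 := q *m B^T *m invmx (B *m B^T).
Let r := q - x0 *m B.

Let residual_orth : r *m B^T = 0.
Proof. by rewrite /r mulmxBl -mulmxA (mulmxKV G_unit) subrr. Qed.

Let residual_orth_tr : B *m r^T = 0.
Proof. by rewrite -[B *m r^T]trmxK trmx_mul trmxK residual_orth trmx0. Qed.

Let sqnorm_residualD (z : 'rV[R]_n) : sqnorm (r + z *m B) = sqnorm r + sqnorm (z *m B).
Proof.
rewrite /sqnorm linearD /= mulmxDl !mulmxDr.
rewrite trmx_mul mulmxA residual_orth mul0mx -mulmxA residual_orth_tr mulmx0.
by rewrite addr0 add0r mxE.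
Qed.

Let dist_residual : dist q <<B>>%MS = Num.sqrt (sqnorm r).
Proof.
apply/le_anti/andP; split.
  by rewrite -enorm_sqnorm; apply: dist_le_enorm; rewrite genmxE submxMl.
apply: lb_le_inf.
  by exists (enorm r), (x0 *m B); rewrite //= genmxE submxMl.
move=> _ [h + <-]; rewrite /= genmxE => /submxP [z ->].
have -> : q - z *m B = r + (x0 - z) *m B by rewrite /r mulmxBl addrA subrK.
by rewrite enorm_sqnorm ler_sqrt ?sqnorm_ge0 // sqnorm_residualD lerDl sqnorm_ge0.
Qed.

Lemma gram_det_col_mx_nondeg :
  gram_det (col_mx q B) = dist q <<B>>%MS ^+ 2 * gram_det B.
Proof.
rewrite dist_residual sqr_sqrtr ?sqnorm_ge0 //.
pose E : 'M[R]_(1 + n) := block_mx 1 (- x0) 0 1.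
have EqB : E *m col_mx q B = col_mx r B.
  by rewrite mul_block_col !mul1mx mul0mx add0r mulNmx.
have detE : \det E = 1 by rewrite det_ublock !det1 mulr1.
have -> : gram_det (col_mx q B) = gram_det (col_mx r B).
  rewrite /gram_det -EqB trmx_mul !mulmxA -(mulmxA E) !det_mulmx det_tr detE.
  by rewrite mul1r mulr1.
rewrite /gram_det tr_col_mx mul_col_row residual_orth residual_orth_tr.
by rewrite det_ublock det_mx11.
Qed.

End Projection.

Lemma gram_det_col_mx_eq0 n (q : pt) (B : 'M[R]_(n, d)) :
  gram_det B = 0 -> gram_det (col_mx q B) = 0.
Proof.
move=> /eqP/det0P [v v0 vG]; apply/eqP/det0P.
have vB : v *m B = 0.
  by apply: sqnorm_eq0; rewrite /sqnorm trmx_mul mulmxA -(mulmxA v) vG mul0mx mxE.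
exists (row_mx 0 v).
  by apply: contra v0; rewrite -row_mx0 => /eqP/eq_row_mx[_ ->].
by rewrite mulmxA mul_row_col mul0mx add0r vB mul0mx.
Qed.

Lemma gram_det_col_mx n (q : pt) (B : 'M[R]_(n, d)) :
  gram_det (col_mx q B) = dist q <<B>>%MS ^+ 2 * gram_det B.
Proof.
have [gB0|/gram_det_col_mx_nondeg //] := eqVneq (gram_det B) 0.
by rewrite gram_det_col_mx_eq0 // gB0 mulr0.
Qed.

Lemma gram_det_neq0_rank n (A : 'M[R]_(n, d)) : gram_det A != 0 -> \rank A = n.
Proof.
move=> gA; apply/eqP; rewrite eqn_leq rank_leq_row /=.
by rewrite -[X in (X <= _)%N](@mxrank_unit _ _ (A *m A^T)) ?mxrankM_maxl // unitmxE unitfE.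
Qed.

Lemma gram_det_row_perm n (s : 'S_n) (A : 'M[R]_(n, d)) :
  gram_det (row_perm s A) = gram_det A.
Proof.
rewrite /gram_det row_permE trmx_mul !mulmxA -(mulmxA (perm_mx s)) !det_mulmx.
by rewrite det_tr det_perm mulrC mulrA -expr2 sqrr_sign mul1r.
Qed.

Definition seqmx n (s : seq pt) : 'M[R]_(n, d) := \matrix_(i < n) nth 0 s i.

Lemma seqmx_cons n (q : pt) (s : seq pt) : seqmx n.+1 (q :: s) = col_mx q (seqmx n s).
Proof.
apply/matrixP => i j; rewrite !mxE.
by case: splitP => k ->; rewrite ?(ord1 k) // mxE.
Qed.

Lemma gram_det_seqmx_perm n (s t : seq pt) :
  perm_eq s t -> size t = n -> gram_det (seqmx n s) = gram_det (seqmx n t).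
Proof.
move=> st <-; have /tuple_permP [p Hp] : perm_eq s (in_tuple t) by [].
rewrite -[RHS](gram_det_row_perm p); congr gram_det; apply/matrixP => i j.
by rewrite !mxE Hp /= (nth_map i) ?size_enum_ord // (tnth_nth 0) nth_ord_enum.
Qed.

Local Open Scope fset_scope.

Lemma gram_det_ptmx_fsetD1 n (S : {fset pt}) (q : pt) : q \in S -> #|` S| = n.+1 ->
  gram_det (ptmx n.+1 S) =
  dist q <<ptmx n (S `\ q)>>%MS ^+ 2 * gram_det (ptmx n (S `\ q)).
Proof.
move=> qS cardS; rewrite -gram_det_col_mx -seqmx_cons.
apply: (gram_det_seqmx_perm (n := n.+1)); last first.
  by move: cardS; rewrite (cardfsD1 q) qS add1n.
apply: uniq_perm; rewrite ?fset_uniq //= ?fset_uniq ?in_fsetD1 ?eqxx //.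
by move=> x; rewrite in_cons in_fsetD1; case: eqVneq => [->|].
Qed.

Lemma ptmx_row_sub n (S : {fset pt}) (p : pt) : p \in S -> #|` S| = n ->
  (p <= ptmx n S)%MS.
Proof.
move=> pS cardS; have ip : (index p (enum_fset S) < n)%N by rewrite -cardS index_mem.
have -> : p = row (Ordinal ip) (ptmx n S) by rewrite rowK nth_index.
exact: row_sub.
Qed.

End Gram.

Lemma coreset_far_point (R : realType) (d k : nat) (alpha : R) (C P : {fset 'rV[R]_d})
    (H : 'M[R]_d) (q : 'rV[R]_d) :
  0 < alpha -> approx_coreset k alpha C P -> \rank H = (k - 1)%N ->
  q \in P -> 0 < dist q H -> exists2 q', q' \in C & dist q H <= alpha * dist q' H.
Proof.
move=> alpha_gt0 hCP rankH qP dq_gt0.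
suff /hasP[q' q'C farq'] : has (fun p => dist q H / alpha <= dist p H) (enum_fset C).
  by exists q'; rewrite // -ler_pdivrMl // mulrC.
apply/negPn/negP => /hasPn farC; move: (hCP H rankH); apply/negP; rewrite -ltNge.
apply: (@lt_le_trans _ _ (dist q H / alpha)).
  rewrite /height big_seq; apply: bigmax_lt => [|p /farC]; last by rewrite ltNge.
  exact: divr_gt0.
by rewrite ler_pM2r ?invr_gt0 //; apply: (@le_bigmax_seq _ _ _ _ _ q) => //; exact: qP.
Qed.

Section Exchange.
Local Open Scope fset_scope.
Variables (R : realType) (d k : nat) (alpha : R).
Local Notation pt := 'rV[R]_d.
Local Notation gram S := (gram_det (ptmx k.+1 S)).
Hypothesis alpha_gt0 : 0 < alpha.

(* With [H] the span of [S `\ q], swapping [q] for [q'] multiplies the Gram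
   determinant by [(dist q' H / dist q H)^2]. *)
Lemma coreset_exchange (P C S : {fset pt}) (q : pt) :
  approx_coreset k.+1 alpha C P -> q \in P -> q \in S -> #|` S| = k.+1 ->
  0 < gram S ->
  exists q', [/\ q' \in C, q' \notin S `\ q & gram S <= alpha ^+ 2 * gram (q' |` S `\ q)].
Proof.
move=> hCP qP qS cardS gS_gt0.
set B := ptmx k (S `\ q); set H := <<B>>%MS.
have cardSq : #|` S `\ q| = k by move: cardS; rewrite (cardfsD1 q) qS add1n => -[].
have gS : gram S = dist q H ^+ 2 * gram_det B := gram_det_ptmx_fsetD1 qS cardS.
have dq_gt0 : 0 < dist q H.
  rewrite lt_neqAle dist_ge0 andbT; apply: contraTneq gS_gt0 => dq0.
  by rewrite gS -dq0 expr0n mul0r ltxx.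
have gB_gt0 : 0 < gram_det B by rewrite -(pmulr_rgt0 _ (exprn_gt0 2 dq_gt0)) -gS.
have rankH : \rank H = (k.+1 - 1)%N.
  by rewrite genmxE subn1 gram_det_neq0_rank ?gt_eqF.
have [q' q'C farq'] := coreset_far_point alpha_gt0 hCP rankH qP dq_gt0.
have dq'_gt0 : 0 < dist q' H.
  by rewrite -(pmulr_rgt0 _ alpha_gt0); apply: lt_le_trans farq'.
have q'Sq : q' \notin S `\ q.
  apply: contraTN dq'_gt0 => /ptmx_row_sub/(_ cardSq) q'B.
  by rewrite dist_submx ?genmxE ?ltxx.
exists q'; split => //.
have cardS' : #|` q' |` S `\ q| = k.+1 by rewrite cardfsU1 q'Sq cardSq.
rewrite gS (gram_det_ptmx_fsetD1 (fset1U1 _ _) cardS') fsetU1K // -/B -/H.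
rewrite mulrA -exprMn ler_pM2r // ler_pXn2r // nnegrE ?dist_ge0 //.
by rewrite mulr_ge0 ?dist_ge0 ?ltW.
Qed.

End Exchange.

Section Cover.
Local Open Scope fset_scope.
Variables (R : realType) (d k : nat) (alpha : R) (U UC : {fset 'rV[R]_d}).
Local Notation gram S := (gram_det (ptmx k.+1 S)).
Hypothesis alpha_ge1 : 1 <= alpha.
Hypothesis UC_sub_U : UC `<=` U.
Hypothesis coreset_cover : forall q, q \in U ->
  exists P C : {fset 'rV[R]_d}, [/\ q \in P, C `<=` UC & approx_coreset k.+1 alpha C P].

Let alpha_gt0 : 0 < alpha. Proof. exact: lt_le_trans alpha_ge1. Qed.

Lemma exchange_into_cover n (S : {fset 'rV[R]_d}) :
  S `<=` U -> #|` S| = k.+1 -> 0 < gram S -> (#|` S `\` UC| <= n)%N ->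
  exists T, [/\ T `<=` UC, #|` T| = k.+1 & gram S <= alpha ^+ (2 * n) * gram T].
Proof.
elim: n S => [|n IHn] S SU cardS gS_gt0 cardSUC.
  exists S; split => //; last by rewrite mul1r.
  by rewrite -fsetD_eq0 -cardfs_eq0 -leqn0.
have [/eqP|[q]] := fset_0Vmem (S `\` UC).
  rewrite fsetD_eq0 => SUC; exists S; split => //.
  by apply: ler_peMl; [exact: ltW | exact: exprn_ege1].
move=> qSUC; move: (qSUC); rewrite in_fsetD => /andP[qUC qS].
have [P [C [qP CUC hCP]]] := coreset_cover (fsubsetP SU q qS).
have [q' [q'C q'Sq gS]] := coreset_exchange alpha_gt0 hCP qP qS cardS gS_gt0.
set S' := q' |` S `\ q.
have S'U : S' `<=` U.
  rewrite fsubUset fsub1set (fsubsetP UC_sub_U) ?(fsubsetP CUC) //=.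
  exact: fsubset_trans (fsubsetDl _ _) SU.
have cardS' : #|` S'| = k.+1.
  by rewrite cardfsU1 q'Sq; move: cardS; rewrite (cardfsD1 q) qS.
have gS'_gt0 : 0 < gram S'.
  by rewrite -(pmulr_rgt0 _ (exprn_gt0 2 alpha_gt0)); apply: lt_le_trans gS.
have cardS'UC : (#|` S' `\` UC| <= n)%N.
  have S'UC_sub : S' `\` UC `<=` (S `\` UC) `\ q.
    apply/fsubsetP => x; rewrite !inE => /andP[xUC /orP[/eqP xq'|/andP[xq xS]]].
      by move: xUC; rewrite xq' (fsubsetP CUC _ q'C).
    by rewrite xq xUC xS.
  apply: leq_trans (fsubset_leq_card S'UC_sub) _.
  by move: cardSUC; rewrite (cardfsD1 q (S `\` UC)) qSUC.
have [T [TUC cardT gS']] := IHn S' S'U cardS' gS'_gt0 cardS'UC.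
exists T; split => //; apply: le_trans gS _.
by rewrite mulnS exprD -mulrA ler_pM2l ?exprn_gt0.
Qed.

Lemma maxdet_le_cover : maxdet k.+1 U <= alpha ^+ (2 * k.+1) * maxdet k.+1 UC.
Proof.
have maxdetUC_ge0 : 0 <= maxdet k.+1 UC by apply: bigmax_ge_id.
rewrite {1}/maxdet big_seq_cond; apply: bigmax_le => [|S].
  by rewrite mulr_ge0 // exprn_ge0 // ltW.
rewrite fpowersetE => /andP[SU /eqP cardS].
have [gS_le0|gS_gt0] := leP (gram S) 0.
  by apply: le_trans gS_le0 _; rewrite mulr_ge0 // exprn_ge0 // ltW.
have cardSUC : (#|` S `\` UC| <= k.+1)%N by rewrite -cardS fsubset_leq_card ?fsubsetDl.
have [T [TUC cardT gST]] := exchange_into_cover SU cardS gS_gt0 cardSUC.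
apply: le_trans gST _; rewrite ler_pM2l ?exprn_gt0 //.
by apply: (@le_bigmax_seq _ _ _ _ _ T); rewrite ?fpowersetE ?cardT.
Qed.

End Cover.

Lemma fbigUP (R : realType) (d m : nat) (Ps : 'I_m -> {fset 'rV[R]_d}) (x : 'rV[R]_d) :
  reflect (exists i, x \in Ps i) (x \in fbigU Ps).
Proof.
apply: (iffP (bigfcupP _ _ _ _)) => [[i _ xi]|[i xi]]; first by exists i.
by exists i; rewrite ?mem_index_enum.
Qed.

Theorem corollary3p4 (R : realType) (d k : nat) (alpha : R)
    (c : {fset 'rV[R]_d} -> {fset 'rV[R]_d}) :
  (1 <= k)%N -> (k <= d)%N -> 1 <= alpha ->
  (forall P : {fset 'rV[R]_d}, fsubset (c P) P /\ approx_coreset k alpha (c P) P) ->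
  forall (m : nat) (Ps : 'I_m -> {fset 'rV[R]_d}), (1 <= m)%N ->
    maxdet k (fbigU (fun i => c (Ps i))) >= maxdet k (fbigU Ps) / alpha ^+ (2 * k).
Proof.
case: k => [//|k] _ _ alpha_ge1 hc m Ps _.
set U := fbigU Ps; set UC := fbigU (fun i => c (Ps i)).
have UC_sub_U : fsubset UC U.
  by apply/fsubsetP => x /fbigUP[i /(fsubsetP (hc _).1) xPi]; apply/fbigUP; exists i.
have cover : forall q, q \in U ->
    exists P C : {fset 'rV[R]_d}, [/\ q \in P, fsubset C UC & approx_coreset k.+1 alpha C P].
  move=> q /fbigUP[i qPi]; exists (Ps i), (c (Ps i)); split => //; last exact: (hc _).2.
  by apply/fsubsetP => x xc; apply/fbigUP; exists i.
rewrite ler_pdivrMr ?exprn_gt0 ?(lt_le_trans ltr01) // mulrC.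
exact: maxdet_le_cover alpha_ge1 UC_sub_U cover.
Qed.
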